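(* Let $K=\operatorname{cone}\{e_1,\dots,e_m\}\subset\mathbb{R}^m$ be a simplicial cone which is an isotone projection cone. Then for every $\varepsilon\in\mathcal{E}$, $K_\varepsilon$ is a $K$-isotone projection set.
   Context: $\mathbb{R}^m$ carries the standard inner product. A simplicial cone is $\operatorname{cone}\{e_1,\dots,e_m\}=\{\sum t^ie_i:t^i\ge0\}$ with $e_1,\dots,e_m$ linearly independent. $\mathcal{E}=\{\varepsilon\in\mathbb{R}^m:|\varepsilon^i|=1,\ i=1,\dots,m\}$ and $K_\varepsilon=\operatorname{cone}\{\varepsilon^1e_1,\dots,\varepsilon^me_m\}$. $x\le_K y$ means $y-x\in K$. A closed convex set $D$ is a $K$-isotone projection set if $x\le_K y$ implies $P_Dx\le_K P_Dy$, where $P_D$ is the metric projection onto $D$. A proper cone $K$ is an isotone projection cone if $K$ itself is a $K$-isotone projection set. *)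

From HB Require Import structures.
From mathcomp Require Import all_boot all_order all_algebra.
From mathcomp Require Import reals.
Set Implicit Arguments. Unset Strict Implicit. Unset Printing Implicit Defensive.
Import Order.TTheory GRing.Theory Num.Theory.
Local Open Scope ring_scope.

Section Defs.
Variables (R : realType) (m : nat).

Definition dotv (u v : 'rV[R]_m) : R := \sum_(i < m) u ord0 i * v ord0 i.

Definition cone_gen (g : 'I_m -> 'rV[R]_m) : 'rV[R]_m -> Prop :=
  fun x => exists t : 'I_m -> R, (forall i, 0 <= t i) /\ x = \sum_(i < m) t i *: g i.

Definition cone_le (K : 'rV[R]_m -> Prop) (x y : 'rV[R]_m) : Prop := K (y - x).

Definition is_metric_proj (D : 'rV[R]_m -> Prop) (x p : 'rV[R]_m) : Prop :=
  D p /\ forall q, D q -> dotv (x - p) (x - p) <= dotv (x - q) (x - q).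

Definition isotone_proj_set (K D : 'rV[R]_m -> Prop) : Prop :=
  forall x y px py, cone_le K x y ->
    is_metric_proj D x px -> is_metric_proj D y py -> cone_le K px py.

End Defs.

From HB Require Import structures.
From mathcomp Require Import all_boot all_order all_algebra.
From mathcomp Require Import reals ring lra.
Import Order.TTheory GRing.Theory Num.Theory.
Set Implicit Arguments. Unset Strict Implicit.
Local Open Scope ring_scope.

(* Let u_1, ..., u_m be the basis dual to e_1, ..., e_m, so that
   K = {q | <u_i, q> >= 0} and K_eps = {q | eps_i <u_i, q> >= 0}.
   Testing the isotonicity of P_K on a pair w - u_j <=_K w - u_j + |u_j|^2 e_j,
   with w in K chosen so that P_K (w - u_j) = w, shows that the u_i are pairwise
   obtuse.  The projection p of x onto K_eps is described coordinatewise by a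
   sign/complementarity condition between a_i = <u_i, p> and mu_i = <e_i, x - p>.
   For x <=_K y, complementarity makes the positive part d of mu(x) - mu(y) satisfy
   <u_k, sum_j d_j u_j> <= 0 wherever d_k > 0, and obtuseness then forces
   |sum_k d_k^+ u_k|^2 <= 0, i.e. mu(x) <= mu(y).  From this, complementarity
   (when mu_i(x) < mu_i(y)) or obtuseness (when they agree) gives
   <u_i, P y - P x> >= 0. *)

Section InnerProduct.
Variables (R : realType) (n : nat).
Implicit Types (u v w : 'rV[R]_n) (a : R).

Lemma dotvC u v : dotv u v = dotv v u.
Proof. by apply: eq_bigr => i _; rewrite mulrC. Qed.

Lemma dotv_is_linear u : linear (dotv u : 'rV[R]_n -> R^o).
Proof.
move=> a v w; rewrite /dotv /GRing.scale /= mulr_sumr -big_split.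
by apply: eq_bigr => i _; rewrite !mxE mulrDr mulrCA.
Qed.

HB.instance Definition _ u :=
  GRing.isLinear.Build R 'rV[R]_n R^o _ (dotv u) (dotv_is_linear u).

Lemma dotvZr u v a : dotv u (a *: v) = a * dotv u v.
Proof. by rewrite /dotv mulr_sumr; apply: eq_bigr => i _; rewrite mxE mulrCA. Qed.

Lemma dotvZl u v a : dotv (a *: u) v = a * dotv u v.
Proof. by rewrite dotvC dotvZr dotvC. Qed.

Lemma dotvNl u v : dotv (- u) v = - dotv u v.
Proof. by rewrite !(dotvC _ v) raddfN. Qed.

Lemma dotv0l v : dotv 0 v = 0.
Proof. by rewrite dotvC raddf0. Qed.

Lemma dotvBl u v w : dotv (u - v) w = dotv u w - dotv v w.
Proof. by rewrite !(dotvC _ w) raddfB. Qed.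

Lemma dotv_ge0 u : 0 <= dotv u u.
Proof. by apply: sumr_ge0 => i _; rewrite -expr2 sqr_ge0. Qed.

Lemma dotv_eq0 u : dotv u u = 0 -> u = 0.
Proof.
move=> uu0; apply/rowP => k; rewrite mxE; apply/eqP; rewrite -sqrf_eq0 expr2.
have /psumr_eq0P uu_eq0 : \sum_(i < n) u 0 i * u 0 i = 0 by [].
by rewrite uu_eq0 // => i _; rewrite -expr2 sqr_ge0.
Qed.

Lemma dotv_sqrB u v :
  dotv (u - v) (u - v) = dotv u u - 2 * dotv u v + dotv v v.
Proof. by rewrite dotvBl !raddfB /= (dotvC v u); ring. Qed.

End InnerProduct.

Lemma le0_of_forall_le_scale (R : realFieldType) (c N : R) :
  (forall t, 0 < t <= 1 -> c <= t * N) -> c <= 0.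
Proof.
move=> cle; rewrite leNgt; apply/negP => c_gt0.
have cN_gt0 : 0 < c + `|N| by rewrite ltr_wpDr.
set t := c / (c + `|N|).
have t_gt0 : 0 < t by rewrite divr_gt0.
have t_le1 : t <= 1 by rewrite ler_pdivrMr // mul1r lerDl.
have tN : t * N <= t * `|N| by rewrite ler_pM2l // real_ler_norm ?num_real.
have tE : t * (c + `|N|) = c by rewrite divfK ?gt_eqF.
have := cle t; rewrite t_gt0 t_le1 => /(_ isT) ctN.
nra.
Qed.

Lemma max0_subN (R : realDomainType) (a : R) : Num.max a 0 - Num.max (- a) 0 = a.
Proof. by case: (ler0P a) => ?; case: (ler0P (- a)) => ?; lra. Qed.

Lemma max0_mulN (R : realDomainType) (a : R) : Num.max a 0 * Num.max (- a) 0 = 0.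
Proof.
by case: (ler0P a) => ?; case: (ler0P (- a)) => ?; rewrite ?mulr0 ?mul0r //; nra.
Qed.

Section ObtuseFamily.
Variables (R : realType) (n k : nat) (v : 'I_k -> 'rV[R]_n).
Hypothesis v_obtuse : forall i j, i != j -> dotv (v i) (v j) <= 0.

Lemma obtuse_pos_part_comb_eq0 (d : 'I_k -> R) :
  (forall i, 0 < d i -> dotv (v i) (\sum_j d j *: v j) <= 0) ->
  \sum_i Num.max (d i) 0 *: v i = 0.
Proof.
move=> dv_le0; pose dp i := Num.max (d i) 0; pose dm i := Num.max (- d i) 0.
have dp_ge0 i : 0 <= dp i by rewrite le_max lexx orbT.
have dm_ge0 i : 0 <= dm i by rewrite le_max lexx orbT.
pose vp := \sum_i dp i *: v i; pose vm := \sum_i dm i *: v i.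
have d_split : \sum_j d j *: v j = vp - vm.
  by rewrite -sumrB; apply: eq_bigr => j _; rewrite -scalerBl max0_subN.
have vp_comb : dotv vp (vp - vm) <= 0.
  rewrite -d_split dotvC raddf_sum /=; apply: sumr_le0 => i _.
  rewrite dotvC dotvZl; have [d_gt0|d_le0] := ltrP 0 (d i).
    by rewrite mulr_ge0_le0 ?dv_le0.
  by rewrite /dp max_r // mul0r.
have vp_vm : dotv vp vm <= 0.
  rewrite dotvC raddf_sum /=; apply: sumr_le0 => j _.
  rewrite dotvC dotvZl raddf_sum mulr_sumr /=; apply: sumr_le0 => i _.
  rewrite dotvZr mulrA; have [<-|ij] := eqVneq j i; first by rewrite max0_mulN mul0r.
  by rewrite mulr_ge0_le0 ?mulr_ge0 ?v_obtuse.
apply: dotv_eq0; apply/le_anti; rewrite dotv_ge0 andbT.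
move: vp_comb; rewrite raddfB /=; lra.
Qed.

End ObtuseFamily.

Definition convex_set (R : realType) (n : nat) (D : 'rV[R]_n -> Prop) : Prop :=
  forall x y (t : R), D x -> D y -> 0 <= t <= 1 -> D (x + t *: (y - x)).

Section MetricProjection.
Variables (R : realType) (n : nat) (D : 'rV[R]_n -> Prop).
Hypothesis D_convex : convex_set D.

Lemma metric_projP x p :
  is_metric_proj D x p <-> D p /\ forall q, D q -> dotv (x - p) (q - p) <= 0.
Proof.
have distE q : dotv (x - q) (x - q)
    = dotv (x - p) (x - p) - 2 * dotv (x - p) (q - p) + dotv (q - p) (q - p).
  by rewrite -dotv_sqrB opprB addrA subrK.
split=> [[Dp p_min]|[Dp p_var]]; split=> // q Dq; last first.
  by rewrite (distE q); have := p_var q Dq; have := dotv_ge0 (q - p); lra.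
suff : 2 * dotv (x - p) (q - p) <= 0 by lra.
apply: (@le0_of_forall_le_scale _ _ (dotv (q - p) (q - p))).
move=> t /andP[t_gt0 t_le1].
have t01 : 0 <= t <= 1 by rewrite ltW.
have := p_min _ (D_convex Dp Dq t01); rewrite [X in _ <= X]distE.
have -> : p + t *: (q - p) - p = t *: (q - p) by rewrite addrAC subrr add0r.
rewrite dotvZl !dotvZr => le_t.
by rewrite -(ler_pM2l t_gt0); nra.
Qed.

End MetricProjection.

Lemma cone_gen_convex (R : realType) (m : nat) (f : 'I_m -> 'rV[R]_m) :
  convex_set (cone_gen f).
Proof.
move=> _ _ t [s [s_ge0 ->]] [r [r_ge0 ->]] /andP[t_ge0 t_le1].
exists (fun i => s i + t * (r i - s i)); split=> [i|].
  have := s_ge0 i; have := r_ge0 i; nra.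
rewrite -sumrB scaler_sumr -big_split; apply: eq_bigr => i _.
by rewrite scalerDl -scalerA scalerBl.
Qed.

Definition sign_compl (R : realDomainType) (s a mu : R) : Prop :=
  [/\ 0 <= s * a, s * mu <= 0 & a * mu = 0].

Lemma sign_compl_le (R : realDomainType) (s a mu a' mu' : R) : s != 0 ->
  sign_compl s a mu -> sign_compl s a' mu' -> mu < mu' -> a <= a'.
Proof.
move=> s_neq0 [sa smu amu] [sa' smu' amu'] mu_lt.
case: (ltgtP s 0) s_neq0 => // [s_lt0|s_gt0] _.
- by move: sa sa' smu smu'; rewrite !nmulr_rge0 // !nmulr_rle0 // => *; nra.
- by move: sa sa' smu smu'; rewrite !pmulr_rge0 // !pmulr_rle0 // => *; nra.
Qed.

Section DualBasis.
Variables (R : realType) (m : nat) (e : 'I_m -> 'rV[R]_m).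
Hypothesis e_free : row_free (\matrix_(i < m) e i).

Definition dual_basis (j : 'I_m) : 'rV[R]_m :=
  row j (invmx (\matrix_(i < m) e i))^T.
Local Notation u := dual_basis.

Let e_unit : \matrix_(i < m) e i \in unitmx. Proof. by rewrite -row_free_unit. Qed.

Lemma dotv_dual_basisE j q :
  dotv (u j) q = (q *m invmx (\matrix_(i < m) e i)) 0 j.
Proof. by rewrite mxE; apply: eq_bigr => i _; rewrite !mxE mulrC. Qed.

Lemma dual_basis_biorth j k : dotv (u j) (e k) = (k == j)%:R.
Proof.
by rewrite dotv_dual_basisE -(rowK (fun i => e i) k) -row_mul mulmxV // !mxE.
Qed.

Lemma basis_expansion q : q = \sum_k dotv (u k) q *: e k.
Proof.
rewrite -{1}(mulmxKV e_unit q) mulmx_sum_row; apply: eq_bigr => k _.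
by rewrite dotv_dual_basisE rowK.
Qed.

Lemma dotv_dual_basis_comb j (c : 'I_m -> R) :
  dotv (u j) (\sum_k c k *: e k) = c j.
Proof.
rewrite raddf_sum (bigD1 j) //= big1 => [|k kj]; rewrite dotvZr dual_basis_biorth.
  by rewrite eqxx mulr1 addr0.
by rewrite (negbTE kj) mulr0.
Qed.

Lemma dotv_basis_dual_comb j (c : 'I_m -> R) :
  dotv (e j) (\sum_k c k *: u k) = c j.
Proof.
rewrite raddf_sum (bigD1 j) //= big1 => [|k kj].
all: rewrite dotvZr dotvC dual_basis_biorth.
  by rewrite eqxx mulr1 addr0.
by rewrite eq_sym (negbTE kj) mulr0.
Qed.

Lemma dual_basis_expansion w : w = \sum_k dotv (e k) w *: u k.
Proof.
set z := \sum_k _; have ez0 k : dotv (e k) (w - z) = 0.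
  by rewrite raddfB /= dotv_basis_dual_comb subrr.
apply/eqP; rewrite -subr_eq0; apply/eqP/dotv_eq0.
rewrite [X in dotv X _]basis_expansion dotvC raddf_sum big1 //= => k _.
by rewrite dotvZr (dotvC _ (e k)) ez0 mulr0.
Qed.

Lemma cone_gen_dualP q : cone_gen e q <-> forall i, 0 <= dotv (u i) q.
Proof.
split=> [[t [t_ge0 ->]] i|q_ge0]; first by rewrite dotv_dual_basis_comb.
by exists (fun k => dotv (u k) q); split; last exact: basis_expansion.
Qed.

Lemma isotone_proj_cone_dual_obtuse :
  isotone_proj_set (cone_gen e) (cone_gen e) ->
  forall i j, i != j -> dotv (u i) (u j) <= 0.
Proof.
move=> K_iso i j ij; pose G k := dotv (u k) (u j).
pose c k := if k == j then 0 else Num.max (G k) 0.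
pose w := \sum_k c k *: e k; pose y := w - u j + G j *: e j.
have c_ge0 k : 0 <= c k by rewrite /c; case: ifP; rewrite ?le_max ?lexx ?orbT.
have Gj_ge0 : 0 <= G j := dotv_ge0 _.
have y_coord k : dotv (u k) y = c k - G k + G j * (j == k)%:R.
  by rewrite !raddfD raddfN /= dotv_dual_basis_comb dotvZr dual_basis_biorth.
have Kw : cone_gen e w by apply/cone_gen_dualP => k; rewrite dotv_dual_basis_comb.
have Ky : cone_gen e y.
  apply/cone_gen_dualP => k; rewrite y_coord /c; case: (eqVneq k j) => [->|kj].
    by rewrite mulr1 add0r addNr.
  by rewrite mulr0 addr0 subr_ge0 le_max lexx.
have proj_x : is_metric_proj (cone_gen e) (w - u j) w.
  apply/(metric_projP (@cone_gen_convex _ _ _)); split=> // q /cone_gen_dualP q_ge0.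
  rewrite addrAC subrr add0r dotvNl raddfB /= dotv_dual_basis_comb /c eqxx subr0.
  by rewrite oppr_le0.
have proj_y : is_metric_proj (cone_gen e) y y.
  apply/(metric_projP (@cone_gen_convex _ _ _)); split=> // q _.
  by rewrite subrr dotv0l.
have le_xy : cone_le (cone_gen e) (w - u j) y.
  apply/cone_gen_dualP => k; rewrite addrAC subrr add0r dotvZr dual_basis_biorth.
  by rewrite mulr_ge0.
move: (K_iso _ _ _ _ le_xy proj_x proj_y) => /cone_gen_dualP /(_ i).
rewrite raddfB /= y_coord dotv_dual_basis_comb eq_sym (negbTE ij) mulr0 addr0.
rewrite -/(G i); lra.
Qed.

Section SignedCone.
Variable eps : 'I_m -> R.
Hypothesis eps_neq0 : forall i, eps i != 0.
Local Notation Keps := (cone_gen (fun i => eps i *: e i)).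

Lemma signed_cone_dualP q : Keps q <-> forall i, 0 <= eps i * dotv (u i) q.
Proof.
split=> [[t [t_ge0 ->]] i|q_ge0].
  under eq_bigr do rewrite scalerA.
  by rewrite dotv_dual_basis_comb mulrCA mulr_ge0 // -expr2 sqr_ge0.
exists (fun k => dotv (u k) q / eps k); split=> [i|].
  have -> : dotv (u i) q / eps i = (eps i * dotv (u i) q) / (eps i ^+ 2).
    by field; rewrite eps_neq0.
  by rewrite divr_ge0 ?sqr_ge0.
rewrite {1}[q]basis_expansion; apply: eq_bigr => k _.
by rewrite scalerA divfK.
Qed.

Lemma metric_proj_signed_cone x p i : is_metric_proj Keps x p ->
  sign_compl (eps i) (dotv (u i) p) (dotv (e i) (x - p)).
Proof.
move=> /(metric_projP (@cone_gen_convex _ _ _)) [/signed_cone_dualP p_ge0 p_var].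
have shift_le0 c : 0 <= eps i * (dotv (u i) p + c) -> c * dotv (e i) (x - p) <= 0.
  move=> pc_ge0; rewrite -dotvZl dotvC.
  have -> : c *: e i = (p + c *: e i) - p by rewrite addrAC subrr add0r.
  apply: p_var; apply/signed_cone_dualP => // k.
  rewrite raddfD /= dotvZr dual_basis_biorth.
  by case: (eqVneq i k) => [<-|_]; rewrite ?mulr1 ?mulr0 ?addr0.
have pi_ge0 := p_ge0 i.
split=> //.
- apply: shift_le0; rewrite mulrDr -expr2; have := sqr_ge0 (eps i); lra.
- apply/le_anti/andP; split.
    by apply: shift_le0; rewrite mulrDr; lra.
  by rewrite -oppr_le0 -mulNr; apply: shift_le0; rewrite subrr mulr0.
Qed.

Lemma metric_proj_signed_cone_le x y p p' i :
  is_metric_proj Keps x p -> is_metric_proj Keps y p' ->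
  dotv (e i) (x - p) < dotv (e i) (y - p') -> dotv (u i) p <= dotv (u i) p'.
Proof.
move=> px py; apply: (sign_compl_le (eps_neq0 i)); exact: metric_proj_signed_cone.
Qed.

Hypothesis dual_obtuse : forall i j, i != j -> dotv (u i) (u j) <= 0.

Lemma signed_cone_proj_residual_le x y p p' :
  cone_le (cone_gen e) x y -> is_metric_proj Keps x p -> is_metric_proj Keps y p' ->
  forall k, dotv (e k) (x - p) <= dotv (e k) (y - p').
Proof.
move=> /cone_gen_dualP le_xy px py.
pose d k := dotv (e k) (x - p) - dotv (e k) (y - p').
have d_comb : \sum_j d j *: u j = (x - p) - (y - p').
  by under eq_bigr do rewrite scalerBl; rewrite sumrB -!dual_basis_expansion.
have d_pos_eq0 : \sum_k Num.max (d k) 0 *: u k = 0.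
  apply: (obtuse_pos_part_comb_eq0 dual_obtuse (d := d)) => k.
  rewrite subr_gt0 => lt_k.
  have := metric_proj_signed_cone_le py px lt_k; have := le_xy k.
  by rewrite d_comb !raddfB /=; lra.
move=> k; have := dotv_basis_dual_comb k (fun i => Num.max (d i) 0).
by rewrite d_pos_eq0 raddf0 => /esym/max_idPr; rewrite subr_le0.
Qed.

Lemma signed_cone_isotone : isotone_proj_set (cone_gen e) Keps.
Proof.
move=> x y p p' le_xy px py; apply/cone_gen_dualP => i.
rewrite raddfB /= subr_ge0.
have mu_le := signed_cone_proj_residual_le le_xy px py.
have := mu_le i; rewrite le_eqVlt => /orP[/eqP mu_eq|mu_lt]; last first.
  exact: metric_proj_signed_cone_le px py mu_lt.
(* Complementarity is silent when the residual coordinates agree; then the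
   residual difference is a nonnegative combination of the [u k], [k != i]. *)
have res_le0 : dotv (u i) ((y - p') - (x - p)) <= 0.
  rewrite (dual_basis_expansion (y - p')) (dual_basis_expansion (x - p)).
  rewrite -sumrB raddf_sum.
  apply: sumr_le0 => k _ /=; rewrite -scalerBl dotvZr.
  have [<-|ik] := eqVneq i k; first by rewrite mu_eq subrr mul0r.
  by rewrite mulr_ge0_le0 ?subr_ge0 ?dual_obtuse.
move: le_xy res_le0 => /cone_gen_dualP /(_ i); rewrite !raddfB /=; lra.
Qed.

End SignedCone.
End DualBasis.

Theorem proposition4 (R : realType) (m : nat) (e : 'I_m -> 'rV[R]_m)
  (e_indep : row_free (\matrix_(i < m) e i))
  (K_iso : isotone_proj_set (cone_gen e) (cone_gen e))
  (eps : 'I_m -> R) (eps_sign : forall i, `|eps i| = 1) :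
  isotone_proj_set (cone_gen e) (cone_gen (fun i => eps i *: e i)).
Proof.
apply: (signed_cone_isotone e_indep).
- by move=> i; rewrite -normr_gt0 eps_sign.
- exact: isotone_proj_cone_dual_obtuse.
Qed.
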